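(* Let $K$ be a compact Hausdorff space and let $(f_n)_{n\in\omega}$ be a sequence of continuous functions $f_n\colon\operatorname{dom}(f_n)\to K$, where for each $n$ the set $\operatorname{dom}(f_n)$ is a closed subset of $K$, such that $K\times K=\bigcup_{n\in\omega}(f_n\cup f_n^{-1})$. Then $|K|\le\aleph_0$.
   Context: Functions are identified with their graphs: $f_n=\{(x,f_n(x)):x\in\operatorname{dom}(f_n)\}\subseteq K\times K$, and $f_n^{-1}=\{(f_n(x),x):x\in\operatorname{dom}(f_n)\}$. *)

From mathcomp Require Import all_boot all_order.
From mathcomp Require Import all_classical all_reals all_analysis.

From mathcomp Require Import all_boot all_order.
From mathcomp Require Import all_classical all_reals all_analysis.
Local Open Scope classical_set_scope.

(* Let L be the set of condensation points of K: it is closed, and nonempty when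
   K is uncountable.  If L has no isolated point, a Cantor-type construction
   yields two decreasing sequences of open sets meeting L, the n-th pair chosen
   so that neither f_n nor f_n^-1 maps a point of the first set into the second;
   their limit points x, y satisfy (x, y) \notin f_n \cup f_n^-1 for every n.
   If y is isolated in L, pick a compact neighbourhood B of y with no other
   condensation point, and x in B outside {f_n(y)}.  Then B is covered by the
   countable set {f_n(x)} and the sets B \cap f_n^-1(x), which are compact and,
   as they avoid y, free of condensation points, hence countable: so B is
   countable, although y is a condensation point. *)

Lemma countableU (T : Type) (A B : set T) :
  countable A -> countable B -> countable (A `|` B).
Proof.
move=> cA cB.
apply: (@sub_countable _ _ _ (\bigcup_(b in [set: bool]) (if b then A else B))).
  by apply: subset_card_le => x [Ax|Bx]; [exists true|exists false].
by apply: bigcup_countable => [|[]]; first exact: countableP.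
Qed.

Lemma countable_partial_images {T U : Type} (D : nat -> set T) (f : nat -> T -> U)
  (w : T) :
  countable [set z | exists n, D n w /\ f n w = z].
Proof.
apply: (@sub_countable _ _ _ ((fun n => f n w) @` setT)).
  by apply: subset_card_le => z [n [_ <-]]; exists n.
exact: sub_countable (card_image_le _ _) (countableP _).
Qed.

Lemma closed_partial_fibre {K : topologicalType} {D : set K} {g : K -> K} (x : K) :
  hausdorff_space K -> closed D -> {within D, continuous g} ->
  closed [set z | D z /\ g z = x].
Proof.
move=> hK cD cg.
have cx : closed [set x] := @accessible_closed_set1 _ (hausdorff_accessible hK) x.
have /continuous_closedP/(_ _ cx) := cg.
move=> /closed_subspaceP [V cV VD].
suff -> : [set z | D z /\ g z = x] = V `&` D by exact: closedI.
by rewrite VD; apply/seteqP; split=> z [].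
Qed.

Lemma decreasing_closed_bigcap_nonempty (K : topologicalType) (C : nat -> set K) :
  compact [set: K] -> (forall k, closed (C k)) -> (forall k, C k.+1 `<=` C k) ->
  (forall k, C k !=set0) -> \bigcap_k C k !=set0.
Proof.
move=> cK cC sC C0.
have decrC i j : (i <= j)%N -> C j `<=` C i.
  move=> /subnK <-; elim: (j - i)%N => [|m IH] //=.
  by rewrite addSn; exact: subset_trans (sC _) IH.
pose G := [set A : set K | exists k, C k `<=` A].
have FG : ProperFilter G.
  apply: Build_ProperFilter_ex => [A [k sA]|].
    by have [z Cz] := C0 k; exists z; exact: sA.
  constructor; first by exists 0%N.
  - move=> A B [i sA] [j sB]; exists (maxn i j) => z Cz; split.
      exact/sA/(decrC _ _ (leq_maxl i j)).
    exact/sB/(decrC _ _ (leq_maxr i j)).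
  - by move=> A B AB [k sA]; exists k; exact: subset_trans AB.
have [p [_ clp]] := cK G FG filterT.
exists p => k _; apply: (cC k) => B nB.
by have [z [Cz Bz]] := clp (C k) B (ex_intro _ k (@subset_refl _ _)) nB; exists z.
Qed.

Section CondensationPoints.
Context {K : topologicalType}.

Definition condensation_point (x : K) := forall N, nbhs x N -> ~ countable N.

Lemma closed_condensation_point : closed condensation_point.
Proof.
move=> z clz N Nz cN.
have [w [cw Nw]] := clz _ (nbhs_interior Nz).
exact: cw N Nw cN.
Qed.

Lemma compact_no_condensation_countable (C : set K) : compact C ->
  (forall x, C x -> ~ condensation_point x) -> countable C.
Proof.
move=> cC nocond; apply: contrapT => nC.
pose G := [set A : set K | exists2 S, countable S & C `\` S `<=` A].
have FG : ProperFilter G.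
  apply: Build_ProperFilter_ex => [A [S cS sA]|].
    apply: contrapT => /forallNP A0; apply: nC; apply: sub_countable cS.
    apply: subset_card_le => x Cx; apply: contrapT => nSx.
    exact: (A0 x) (sA x (conj Cx nSx)).
  constructor; first by exists set0; [exact: countable0|].
  - move=> A B [S cS sA] [S' cS' sB]; exists (S `|` S'); first exact: countableU.
    move=> x [Cx nSS']; split; [apply: sA|apply: sB]; split=> // ?.
      by apply: nSS'; left.
    by apply: nSS'; right.
  - by move=> A B AB [S cS sA]; exists S => //; exact: subset_trans AB.
have GC : G C by exists set0; [exact: countable0|move=> x []].
have [p [Cp clp]] := cC G FG GC.
have /existsNP [N /not_implyP [Np /contrapT cN]] := nocond p Cp.
have GNC : G (~` N) by exists N => // x [].
by have [z [nz zN]] := clp _ _ GNC Np.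
Qed.

Lemma exists_condensation_point : compact [set: K] -> ~ countable [set: K] ->
  exists x, condensation_point x.
Proof.
move=> cK nC; apply: contrapT => /forallNP nocond.
exact/nC/compact_no_condensation_countable.
Qed.

End CondensationPoints.

Lemma continuous_within_nbhs {K : topologicalType} {D : set K} {g : K -> K}
  {x : K} {N : set K} :
  {within D, continuous g} -> D x -> nbhs (g x) N ->
  nbhs x (fun w => D w -> N (g w)).
Proof. by move=> /subspace_continuousP cg Dx; exact: cg x Dx N. Qed.

Section PerfectClosedSet.
Context {K : topologicalType} {L : set K}.
Hypotheses (hK : hausdorff_space K) (cK : compact [set: K]).

Let meets (U : set K) := open U /\ U `&` L !=set0.

Lemma meets_shrink {U : set K} : meets U -> exists2 U', meets U' & closure U' `<=` U.
Proof.
move=> [oU [z [Uz Lz]]].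
have [B nB cB] :=
  @compact_regular K z setT hK cK filterT U (open_nbhs_nbhs (conj oU Uz)).
exists B°; last exact: subset_trans (closureS (@interior_subset _ B)) cB.
split; first exact: open_interior.
by exists z; split=> //; exact: nbhs_singleton (nbhs_interior nB).
Qed.

Lemma meets_nested_point : closed L -> forall U : nat -> set K,
  (forall k, meets (U k)) -> (forall k, closure (U k.+1) `<=` U k) ->
  exists x, forall k, U k x.
Proof.
move=> cL U mU sU.
have [|k|k|x Cx] :=
  @decreasing_closed_bigcap_nonempty K (fun k => closure (U k) `&` L) cK.
- by move=> k; apply: closedI => //; exact: closed_closure.
- by move=> z [clz Lz]; split=> //; exact/subset_closure/sU.
- by have [_ [z [Uz Lz]]] := mU k; exists z; split=> //; exact: subset_closure.
- by exists x => k; have [clx _] := Cx k.+1 I; exact: sU.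
Qed.

Hypothesis L_perfect : forall U, open U -> U `&` L !=set0 -> ~ is_subset1 (U `&` L).

Lemma meets_avoid_partial_map {D : set K} {g : K -> K} {U V : set K} :
  closed D -> {within D, continuous g} -> meets U -> meets V ->
  exists U' V', [/\ meets U', meets V', U' `<=` U, V' `<=` V &
    forall a b, U' a -> V' b -> ~ (D a /\ g a = b)].
Proof.
move=> cD cg [oU [x [Ux Lx]]] [oV VL].
have [Dx|nDx] := pselect (D x); last first.
  exists (U `&` ~` D), V; split=> //; last by move=> a b [_ nDa] _ [].
  split; first by apply: openI => //; exact: closed_openC.
  by exists x.
have [y [[Vy Ly] gxy]] : exists y, (V `&` L) y /\ g x != y.
  apply: contrapT => /forallNP ny; apply: (L_perfect _ oV VL) => y1 y2 Hy1 Hy2.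
  have gx_eq y : (V `&` L) y -> g x = y.
    by move=> Hy; apply: contrapT => /eqP gxy; exact: (ny y).
  by rewrite -(gx_eq _ Hy1) -(gx_eq _ Hy2).
move: hK; rewrite open_hausdorff => /(_ _ _ gxy) [[A1 A2]] /=.
rewrite !inE => -[A1gx A2y] [oA1 oA2 A12].
have := continuous_within_nbhs cg Dx (open_nbhs_nbhs (conj oA1 A1gx)).
rewrite nbhsE => -[W [oW Wx] sW].
exists (U `&` W), (V `&` A2); split.
- by split; [exact: openI|exists x].
- by split; [exact: openI|exists y].
- by move=> ? [].
- by move=> ? [].
- move=> a b [_ Wa] [_ A2b] [Da gab].
  suff : (A1 `&` A2) b by rewrite A12.
  by split=> //; rewrite -gab; exact: sW.
Qed.

Lemma meets_avoid_partial_map_both {D : set K} {g : K -> K} {U V : set K} :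
  closed D -> {within D, continuous g} -> meets U -> meets V ->
  exists U' V', [/\ meets U', meets V', closure U' `<=` U, closure V' `<=` V &
    forall a b, U' a -> V' b -> ~ (D a /\ g a = b) /\ ~ (D b /\ g b = a)].
Proof.
move=> cD cg mU mV.
have [U1 [V1 [mU1 mV1 sU1 sV1 avoid1]]] := meets_avoid_partial_map cD cg mU mV.
have [V2 [U2 [mV2 mU2 sV2 sU2 avoid2]]] := meets_avoid_partial_map cD cg mV1 mU1.
have [U3 mU3 cU3] := meets_shrink mU2.
have [V3 mV3 cV3] := meets_shrink mV2.
have sU3 : U3 `<=` U2 := subset_trans (@subset_closure _ _) cU3.
have sV3 : V3 `<=` V2 := subset_trans (@subset_closure _ _) cV3.
exists U3, V3; split=> //.
- exact: subset_trans cU3 (subset_trans sU2 sU1).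
- exact: subset_trans cV3 (subset_trans sV2 sV1).
- move=> a b U3a V3b; split; last exact: avoid2 (sV3 _ V3b) (sU3 _ U3a).
  exact: avoid1 (sU2 _ (sU3 _ U3a)) (sV2 _ (sV3 _ V3b)).
Qed.

Context {D : nat -> set K} {f : nat -> K -> K}.
Hypotheses (closedD : forall n, closed (D n))
  (contf : forall n, {within D n, continuous (f n)}).

Let separates n (P P' : set K * set K) :=
  [/\ meets P'.1, meets P'.2, closure P'.1 `<=` P.1, closure P'.2 `<=` P.2 &
    forall a b, P'.1 a -> P'.2 b ->
      ~ (D n a /\ f n a = b) /\ ~ (D n b /\ f n b = a)].

Lemma perfect_avoids_partial_maps : closed L -> L !=set0 ->
  exists x y, forall n, ~ (D n x /\ f n x = y) /\ ~ (D n y /\ f n y = x).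
Proof.
move=> cL [z Lz].
have step n (P : set K * set K) :
    exists P', meets P.1 -> meets P.2 -> separates n P P'.
  have [[mU mV]|nm] := pselect (meets P.1 /\ meets P.2); last first.
    by exists P => mU mV; exfalso; exact: nm.
  have [U' [V' sep]] := meets_avoid_partial_map_both (closedD n) (contf n) mU mV.
  by exists (U', V').
have [G sepG] := choice (fun nP : nat * (set K * set K) => step nP.1 nP.2).
pose S := fix S k := if k is k'.+1 then G (k', S k') else (@setT K, @setT K).
have mS k : meets (S k).1 /\ meets (S k).2.
  elim: k => [|k [mU mV]]; last by have [] := sepG (k, S k) mU mV.
  by split; split; [exact: openT|by exists z|exact: openT|by exists z].
have sepS k : separates k (S k) (S k.+1) := sepG (k, S k) (mS k).1 (mS k).2.
have [x Sx] : exists x, forall k, (S k).1 x.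
  by apply: (meets_nested_point cL) => k; [exact: (mS k).1|have [] := sepS k].
have [y Sy] : exists y, forall k, (S k).2 y.
  by apply: (meets_nested_point cL) => k; [exact: (mS k).2|have [] := sepS k].
exists x, y => n; have [_ _ _ _ avoid] := sepS n.
exact: avoid x y (Sx n.+1) (Sy n.+1).
Qed.

End PerfectClosedSet.

Section IsolatedCondensationPoint.
Context {K : topologicalType} {D : nat -> set K} {f : nat -> K -> K}.
Hypotheses (hK : hausdorff_space K) (cK : compact [set: K])
  (closedD : forall n, closed (D n))
  (contf : forall n, {within D n, continuous (f n)}).

Lemma countable_compact_partial_fibre (C : set K) (y x : K) (n : nat) :
  compact C ->
  (forall z, C z -> condensation_point z -> z = y) -> ~ (D n y /\ f n y = x) ->
  countable (C `&` [set z | D n z /\ f n z = x]).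
Proof.
move=> cC isoy nyx; apply: compact_no_condensation_countable.
  exact: compact_closedI cC (closed_partial_fibre x hK (closedD n) (contf n)).
by move=> z [Cz [Dz fz]] cz; apply: nyx; rewrite -(isoy z Cz cz).
Qed.

Hypothesis hcover : forall x y : K, exists n : nat,
  (D n x /\ f n x = y) \/ (D n y /\ f n y = x).

Lemma not_isolated_condensation_point {U : set K} {y : K} :
  open U -> U y -> condensation_point y -> ~ is_subset1 (U `&` condensation_point).
Proof.
move=> oU Uy cy iso.
have [B nB cB] :=
  @compact_regular K y setT hK cK filterT U (open_nbhs_nbhs (conj oU Uy)).
have [x [Bx nyx]] : exists x, B x /\ ~ (exists n, D n y /\ f n y = x).
  apply: contrapT => /forallNP nx; apply: (cy B nB).
  apply: (sub_countable _ (countable_partial_images D f y)).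
  by apply: subset_card_le => z Bz; apply: contrapT => nz; exact: (nx z).
apply: (cy B nB); apply: (@sub_countable _ _ _ ([set z | exists n, D n x /\ f n x = z]
  `|` \bigcup_n (closure B `&` [set z | D n z /\ f n z = x]))).
  apply: subset_card_le => z Bz.
  have [n [xz|zx]] := hcover x z; first by left; exists n.
  by right; exists n => //; split=> //; exact: subset_closure.
apply: countableU; first exact: countable_partial_images.
apply: bigcup_countable => [|n _]; first exact: countableP.
refine (@countable_compact_partial_fibre (closure B) y x n _ _ _).
- exact: subclosed_compact (@closed_closure _ B) cK (@subsetT _ _).
- move=> z clz cz; apply: iso; last by split.
  by split=> //; exact: cB.
- by move=> Hn; apply: nyx; exists n.
Qed.

End IsolatedCondensationPoint.

Theorem theorem4p1 (K : topologicalType) (D : nat -> set K) (f : nat -> K -> K)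
  (hK : hausdorff_space K) (cK : compact [set: K])
  (hD : forall n, closed (D n))
  (hf : forall n, {within D n, continuous (f n)})
  (hcover : forall x y : K, exists n : nat,
      (D n x /\ f n x = y) \/ (D n y /\ f n y = x)) :
  countable [set: K].
Proof.
apply: contrapT => nC.
have [y cy] := exists_condensation_point cK nC.
have [perfect|] := pselect (forall U : set K,
  open U -> U `&` condensation_point !=set0 -> ~ is_subset1 (U `&` condensation_point)).
- have [x [x' avoid]] := perfect_avoids_partial_maps hK cK perfect hD hf
    closed_condensation_point (ex_intro _ y cy).
  by have [n [xx'|x'x]] := hcover x x'; have [] := avoid n.
- move=> /existsNP [U /not_implyP [oU /not_implyP [[z [Uz cz]] /contrapT iso]]].
  exact: (not_isolated_condensation_point hK cK hD hf hcover oU Uz cz iso).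
Qed.
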